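(* Let $X$ be a finite connected simplicial complex and $\delta$ a cellular perversity, with $\ge$ denoting the order of $\Lambda(X,\delta)$. (a) If $\Delta\leftrightarrow\Delta'$ and $\delta(\Delta)\ge\delta(\Delta')$, then $\Delta\ge\Delta'$; moreover a defining sequence $\Delta=\Delta_0,\dots,\Delta_r=\Delta'$ can be chosen with $\Delta\leftrightarrow\Delta_i\leftrightarrow\Delta'$ for all $i$. (b) If $\Delta\ge\Delta'$ and either $\delta(\Delta)\ge\delta(\Delta')\ge0$ or $0\ge\delta(\Delta)\ge\delta(\Delta')$, then $\Delta\leftrightarrow\Delta'$. (c) If $\Delta>\Delta'$ and $\Delta$, $\Delta'$ are not incident, then $\delta(\Delta)>0$ and $\delta(\Delta')<0$; if moreover $\delta(\Delta)-\delta(\Delta')=2$, then $\delta(\Delta)=1$ and $\delta(\Delta')=-1$.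
   Context: Simplices of $X$ are open; $\Delta\leftrightarrow\Delta'$ (incident) means one is a face of the other. A cellular perversity is $\delta:\mathbb Z_{\ge0}\to\mathbb Z$ with $\delta(0)=0$ mapping every $\{0,\dots,k\}$ bijectively onto an interval $\{a,\dots,a+k\}$, $a\le0$; $\delta(\Delta):=\delta(\dim\Delta)$. $\Lambda(X,\delta)$ is the set of simplices of $X$ ordered by: $\Delta\ge\Delta'$ iff there is a sequence $\Delta=\Delta_0,\Delta_1,\dots,\Delta_r=\Delta'$ ($r\ge0$) with $\Delta_i\leftrightarrow\Delta_{i+1}$ and $\delta(\Delta_i)=\delta(\Delta_{i+1})+1$ for all $0\le i\le r-1$. *)

From mathcomp Require Import all_boot all_order all_algebra.
Set Implicit Arguments. Unset Strict Implicit. Unset Printing Implicit Defensive.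
Import Order.TTheory GRing.Theory Num.Theory.
Local Open Scope ring_scope.

Definition simplicial_complex (V : finType) (X : {set {set V}}) : Prop :=
  set0 \notin X /\
  forall D E : {set V}, D \in X -> E \subset D -> E != set0 -> E \in X.

Definition sdim (V : finType) (D : {set V}) : nat := (#|D|).-1.

Definition incident (V : finType) (D E : {set V}) : bool :=
  (D \subset E) || (E \subset D).

(* Connectedness: any two simplices are joined by a chain of incident
   simplices of X (X nonempty). Equivalent to connectedness of |X|. *)
Definition sc_connected (V : finType) (X : {set {set V}}) : Prop :=
  X != set0 /\
  forall D E, D \in X -> E \in X ->
    exists s : seq {set V}, all (mem X) s /\ path (@incident V) D s /\ last D s = E.

Definition cellular_perversity (delta : nat -> int) : Prop :=
  delta 0%N = 0 /\
  forall k : nat, exists a : int,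
    a <= 0 /\
    (forall i : nat, (i <= k)%N -> a <= delta i <= a + k%:Z) /\
    (forall i j : nat, (i <= k)%N -> (j <= k)%N -> delta i = delta j -> i = j) /\
    (forall z : int, a <= z <= a + k%:Z -> exists2 i : nat, (i <= k)%N & delta i = z).

Definition pdelta (V : finType) (delta : nat -> int) (D : {set V}) : int :=
  delta (sdim D).

Definition lstep (V : finType) (delta : nat -> int) (D E : {set V}) : bool :=
  incident D E && (pdelta delta D == pdelta delta E + 1).

Definition lge (V : finType) (X : {set {set V}}) (delta : nat -> int)
    (D E : {set V}) : Prop :=
  exists s : seq {set V},
    all (mem X) s /\ path (lstep delta) D s /\ last D s = E.

Definition lgt (V : finType) (X : {set {set V}}) (delta : nat -> int)
    (D E : {set V}) : Prop := lge X delta D E /\ D <> E.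

(* As delta is injective on every {0, ..., k} with image an
   interval containing 0, a step whose target has delta >= 0 must lower the
   dimension and a step whose source has delta <= 0 must raise it: a sequence
   ending in delta >= 0 descends through faces, one starting in delta <= 0
   ascends through cofaces.  This gives (b), and (c) is its contrapositive.
   For (a), with S a face of L, delta maps 0, ..., dim L onto an interval, so
   every value between delta(D) and delta(E) is delta(j) for some j <= dim L;
   the j-dimensional members of one flag of faces of L passing through S
   then form the required sequence. *)

From mathcomp Require Import all_boot all_order all_algebra.
From mathcomp Require Import zify.
Set Implicit Arguments. Unset Strict Implicit.
Import Order.TTheory GRing.Theory Num.Theory.
Local Open Scope ring_scope.

Section Perversity.

Variable delta : nat -> int.
Hypothesis perv : cellular_perversity delta.

Lemma perversity_not_between i j : (j < i)%N ->
  ~ ((delta j <= delta i <= 0) \/ (0 <= delta i <= delta j)).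
Proof.
have [d0 interval] := perv.
move=> lt_ji between.
have [a [_ [range [_ onto]]]] := interval i.-1.
have [_ [_ [_ [inj _]]]] := interval i.
have := range 0%N (leq0n _); have := range j ltac:(lia).
rewrite d0 => /andP[aj jM] /andP[a0 a0M].
have [m le_m dm] : exists2 m : nat, (m <= i.-1)%N & delta m = delta i.
  by apply: onto; apply/andP; split; lia.
by have := inj m i ltac:(lia) (leqnn _) dm; lia.
Qed.

Lemma perversity_ltn_nonneg i j : 0 <= delta j -> delta j < delta i -> (j < i)%N.
Proof.
move=> j_ge0 lt_ji; case: (ltngtP i j) => [lt_ij | // | eq_ij]; last first.
  by rewrite eq_ij in lt_ji; lia.
by case: (perversity_not_between lt_ij); right; lia.
Qed.

Lemma perversity_ltn_nonpos i j : delta i <= 0 -> delta j < delta i -> (i < j)%N.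
Proof.
move=> i_le0 lt_ji; case: (ltngtP i j) => [// | lt_ji' | eq_ij]; last first.
  by rewrite eq_ij in lt_ji; lia.
by case: (perversity_not_between lt_ji'); left; lia.
Qed.

Lemma perversity_descending_walk M i k : (i <= M)%N -> (k <= M)%N ->
  delta k <= delta i ->
  exists js : seq nat, [/\ all (fun j => (j <= M)%N) js,
    path (fun j j' => delta j == delta j' + 1) i js & last i js = k].
Proof.
move=> iM kM le_ki.
have [a [_ [range [inj onto]]]] := perv.2 M.
suff walk n : forall k, (k <= M)%N -> delta k = delta i - n%:Z ->
    exists js : seq nat, [/\ all (fun j => (j <= M)%N) js,
      path (fun j j' => delta j == delta j' + 1) i js & last i js = k].
  by apply: (walk `|delta i - delta k|%N) => //; lia.
elim: n => [|n IHn] l lM dl.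
  by exists [::]; split => //=; apply: inj => //; lia.
have [l' l'M dl'] : exists2 l' : nat, (l' <= M)%N & delta l' = delta i - n%:Z.
  by apply: onto; have := range _ iM; have := range _ lM; lia.
have [js [jsM jsp jsl]] := IHn l' l'M dl'.
exists (rcons js l); split.
- by rewrite all_rcons lM.
- by rewrite rcons_path jsp jsl dl dl'; apply/eqP; lia.
- by rewrite last_rcons.
Qed.

End Perversity.

Lemma incidentC (V : finType) (D E : {set V}) : incident D E = incident E D.
Proof. by rewrite /incident orbC. Qed.

Lemma incident_card_eq (V : finType) (D E : {set V}) :
  incident D E -> #|D| = #|E| -> D = E.
Proof.
case/orP=> sub eq_card; apply/eqP; last rewrite eq_sym.
  by rewrite eqEcard sub eq_card leqnn.
by rewrite eqEcard sub eq_card leqnn.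
Qed.

Lemma sdim_subset (V : finType) (D E : {set V}) : D \subset E -> (sdim D <= sdim E)%N.
Proof. by move=> /subset_leq_card; rewrite /sdim; lia. Qed.

Section Flag.

Variables (V : finType) (S L : {set V}).
Hypothesis sSL : S \subset L.

Let flag_seq := enum S ++ enum (L :\: S).

Definition flag (j : nat) : {set V} := [set x in take j.+1 flag_seq].

Let uniq_flag_seq : uniq flag_seq.
Proof.
rewrite cat_uniq !enum_uniq /= andbT; apply/hasPn => x.
by rewrite !mem_enum !inE => /andP[].
Qed.

Let mem_flag_seq x : (x \in flag_seq) = (x \in L).
Proof.
rewrite mem_cat !mem_enum !inE.
by case xS: (x \in S); rewrite //= (subsetP sSL).
Qed.

Lemma card_flag j : (j < #|L|)%N -> #|flag j| = j.+1.
Proof.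
move=> jL; rewrite cardsE; move/card_uniqP: (take_uniq j.+1 uniq_flag_seq) => ->.
rewrite size_takel // size_cat -!cardE cardsDS //.
by have := subset_leq_card sSL; lia.
Qed.

Lemma flag_subset j : flag j \subset L.
Proof. by apply/subsetP => x; rewrite inE => /mem_take; rewrite mem_flag_seq. Qed.

Lemma flag_homo i j : (i <= j)%N -> flag i \subset flag j.
Proof.
move=> ij; apply/subsetP => x; rewrite !inE.
by rewrite -(@take_takel _ i.+1 j.+1 flag_seq) //; apply: mem_take.
Qed.

Lemma incident_flag G j : G \in [set S; L] -> incident G (flag j).
Proof.
rewrite !inE => /orP[] /eqP->; rewrite /incident; last by rewrite flag_subset orbT.
case: (ltnP j #|S|) => jS.
  apply/orP; right; apply/subsetP => x; rewrite inE takel_cat -?cardE //.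
  by move/mem_take; rewrite mem_enum.
apply/orP; left; apply/subsetP => x xS.
by rewrite inE take_cat -cardE ltnNge ltnW // mem_cat mem_enum xS.
Qed.

Lemma flag_sdim G : G \in [set S; L] -> G != set0 -> flag (sdim G) = G.
Proof.
move=> GSL G0; apply/esym/incident_card_eq; first exact: incident_flag.
have GL : (#|G| <= #|L|)%N.
  by apply: subset_leq_card; move: GSL; rewrite !inE => /orP[] /eqP->.
by rewrite card_flag /sdim; have := card_gt0 G; rewrite G0 /=; lia.
Qed.

End Flag.

Section LambdaOrder.

Variables (V : finType) (X : {set {set V}}) (delta : nat -> int).
Hypotheses (complexX : simplicial_complex X) (perv : cellular_perversity delta).

Lemma nonempty_simplex (D : {set V}) : D \in X -> D != set0.
Proof. by case: complexX => X0 _; apply: contraTneq => ->. Qed.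

Lemma flag_in_complex (S L : {set V}) j :
  S \subset L -> L \in X -> (j <= sdim L)%N -> flag S L j \in X.
Proof.
move=> sSL LX jL; case: complexX => _ face_closed; apply: (face_closed L) => //.
  exact: flag_subset.
have L0 := nonempty_simplex LX; rewrite -card_gt0 card_flag //.
by have := card_gt0 L; rewrite L0 /sdim in jL *; lia.
Qed.

Lemma lstep_flag (S L : {set V}) i j : S \subset L -> L != set0 ->
  (i <= sdim L)%N -> (j <= sdim L)%N -> delta i == delta j + 1 ->
  lstep delta (flag S L i) (flag S L j).
Proof.
move=> sSL L0 iL jL dij; have := card_gt0 L; rewrite L0 /sdim in iL jL * => L_gt0.
have sdim_flag k : (k <= #|L|.-1)%N -> sdim (flag S L k) = k.
  by move=> kL; rewrite /sdim card_flag //; lia.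
rewrite /lstep /pdelta !sdim_flag // dij andbT /incident.
by case: (leqP i j) => [/flag_homo-> | /ltnW/flag_homo->]; rewrite ?orbT.
Qed.

Lemma nested_lstep_path (S L D E : {set V}) :
  S \subset L -> S \in X -> L \in X -> D \in [set S; L] -> E \in [set S; L] ->
  pdelta delta E <= pdelta delta D ->
  exists s : seq {set V},
    [/\ all (mem X) s, path (lstep delta) D s, last D s = E &
        all (fun F => incident D F && incident F E) (D :: s)].
Proof.
move=> sSL SX LX DSL ESL le_ED.
have in_X G : G \in [set S; L] -> G \in X.
  by rewrite !inE => /orP[] /eqP->.
have sdimL G : G \in [set S; L] -> (sdim G <= sdim L)%N.
  by rewrite !inE => /orP[] /eqP-> //; apply: sdim_subset.
have flagD := flag_sdim sSL DSL (nonempty_simplex (in_X D DSL)).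
have flagE := flag_sdim sSL ESL (nonempty_simplex (in_X E ESL)).
have [js [jsL jsp jsl]] :=
  perversity_descending_walk perv (sdimL D DSL) (sdimL E ESL) le_ED.
exists (map (flag S L) js); split.
- by rewrite all_map; apply: sub_all jsL => j /= jL; apply: flag_in_complex.
- rewrite -flagD path_map.
  apply: (sub_in_path (P := fun j => (j <= sdim L)%N) _ _ jsp).
    by move=> i j iL jL; apply: lstep_flag => //; apply: nonempty_simplex.
  by rewrite /= sdimL.
- by rewrite -flagD last_map jsl flagE.
- rewrite -[X in all _ (X :: _)]flagD -map_cons; apply/allP => _ /mapP[j _ ->].
  by rewrite incident_flag // incidentC incident_flag.
Qed.

Lemma incident_lstep_path (D E : {set V}) :
  D \in X -> E \in X -> incident D E -> pdelta delta E <= pdelta delta D ->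
  exists s : seq {set V},
    [/\ all (mem X) s, path (lstep delta) D s, last D s = E &
        all (fun F => incident D F && incident F E) (D :: s)].
Proof.
move=> DX EX /orP[sDE | sED].
  by apply: (nested_lstep_path sDE DX EX); rewrite !inE eqxx ?orbT.
by apply: (nested_lstep_path sED EX DX); rewrite !inE eqxx ?orbT.
Qed.

Lemma lstep_path_pdelta (D : {set V}) s : path (lstep delta) D s ->
  pdelta delta D = pdelta delta (last D s) + (size s)%:Z.
Proof.
elim: s D => [|F s IHs] D /=; first by rewrite addr0.
by case/andP => /andP[_ /eqP->] /IHs->; lia.
Qed.

Lemma lstep_path_nonneg_subset (D : {set V}) s : path (lstep delta) D s ->
  0 <= pdelta delta (last D s) -> last D s \subset D.
Proof.
elim: s D => [|F s IHs] D //= /andP[/andP[DF /eqP dDF] Fs] last_ge0.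
have := lstep_path_pdelta Fs; rewrite /pdelta in dDF last_ge0 * => dF.
have lt_FD : (sdim F < sdim D)%N by apply: (perversity_ltn_nonneg perv); lia.
case/orP: DF => [/sdim_subset le_DF | sFD]; first lia.
exact: subset_trans (IHs F Fs last_ge0) sFD.
Qed.

Lemma lstep_path_nonpos_subset (D : {set V}) s : path (lstep delta) D s ->
  pdelta delta D <= 0 -> D \subset last D s.
Proof.
elim: s D => [|F s IHs] D //= /andP[/andP[DF /eqP dDF] Fs] D_le0.
rewrite /pdelta in dDF D_le0.
have lt_DF : (sdim D < sdim F)%N by apply: (perversity_ltn_nonpos perv); lia.
case/orP: DF => [sDF | /sdim_subset le_FD]; last lia.
by apply: subset_trans sDF (IHs F Fs _); rewrite /pdelta; lia.
Qed.

Lemma lge_incident (D E : {set V}) : lge X delta D E ->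
  0 <= pdelta delta E \/ pdelta delta D <= 0 -> incident D E.
Proof.
case=> s [_ [Ds <-]] [E_ge0 | D_le0]; rewrite /incident.
  by rewrite (lstep_path_nonneg_subset Ds E_ge0) orbT.
by rewrite (lstep_path_nonpos_subset Ds D_le0).
Qed.

Lemma lge_not_incident_sign (D E : {set V}) : lge X delta D E -> ~~ incident D E ->
  0 < pdelta delta D /\ pdelta delta E < 0.
Proof.
move=> DE /negP notDE.
have D_gt0 : ~ pdelta delta D <= 0 by move=> D_le0; apply/notDE/(lge_incident DE); right.
have E_lt0 : ~ 0 <= pdelta delta E by move=> E_ge0; apply/notDE/(lge_incident DE); left.
lia.
Qed.

End LambdaOrder.

Theorem lemma1p2p3 (V : finType) (X : {set {set V}}) (delta : nat -> int) :
  simplicial_complex X -> sc_connected X -> cellular_perversity delta ->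
  (* (a) *)
  (forall D E, D \in X -> E \in X -> incident D E ->
     pdelta delta D >= pdelta delta E ->
     lge X delta D E /\
     exists s : seq {set V},
       [/\ all (mem X) s, path (lstep delta) D s, last D s = E &
           all (fun F => incident D F && incident F E) (D :: s)]) /\
  (* (b) *)
  (forall D E, D \in X -> E \in X -> lge X delta D E ->
     (pdelta delta E <= pdelta delta D /\ 0 <= pdelta delta E) \/
     (pdelta delta D <= 0 /\ pdelta delta E <= pdelta delta D) ->
     incident D E) /\
  (* (c) *)
  (forall D E, D \in X -> E \in X -> lgt X delta D E -> ~~ incident D E ->
     (pdelta delta D > 0 /\ pdelta delta E < 0) /\
     (pdelta delta D - pdelta delta E = 2 ->
        pdelta delta D = 1 /\ pdelta delta E = -1)).
Proof.
move=> complexX _ perv; split; [|split].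
- move=> D E DX EX DE le_ED.
  have [s [sX Ds sE s_inc]] := incident_lstep_path complexX perv DX EX DE le_ED.
  by split; exists s.
- move=> D E _ _ DE [[_ E_ge0] | [D_le0 _]]; apply: (lge_incident perv DE).
    by left.
  by right.
- move=> D E _ _ [DE _] notDE.
  have [D_gt0 E_lt0] := lge_not_incident_sign perv DE notDE.
  by split=> //; lia.
Qed.
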